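(* Let $\mathbb{K}$ be a field of characteristic zero. Let $f_1,\dots,f_m\in\mathbb{K}[X]$ be nonzero polynomials with $\deg f_i=d_i$, let $(\alpha_{i,j})\in\mathbb{Z}_{\ge0}^{m\times\ell}$, let $a_1,\dots,a_\ell\in\mathbb{K}$, and let \[P=\sum_{j=1}^\ell a_j\prod_{i=1}^m f_i^{\alpha_{i,j}}\in\mathbb{K}[X].\] Let $F\in\mathbb{K}[X]$ be irreducible and let $\mu_i=\operatorname{mult}_F(f_i)$. If $P\neq0$, then \[\operatorname{mult}_F(P)\le\max_{1\le j\le\ell}\ \sum_{i=1}^m\left(\mu_i\alpha_{i,j}+(d_i-\mu_i)\binom{\ell+1-j}{2}\right).\]
   Context: For polynomials $F$ and $P\neq0$, $\operatorname{mult}_F(P)$ denotes the multiplicity of $F$ as a factor of $P$, i.e. the largest integer $\mu$ such that $F^\mu$ divides $P$. *)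

From HB Require Import structures.
From mathcomp Require Import all_boot all_order all_algebra.
Set Implicit Arguments. Unset Strict Implicit. Unset Printing Implicit Defensive.
Import Order.TTheory GRing.Theory Num.Theory.
Local Open Scope ring_scope.

(* mult F P : the multiplicity of F as a factor of P, i.e. the largest mu
   such that F^mu divides P.  For P != 0 and F non-constant any such mu is
   < size P, so the maximum over mu < (size P).+1 is the largest one. *)
Definition mult (K : fieldType) (F P : {poly K}) : nat :=
  \max_(mu < (size P).+1 | F ^+ mu %| P) mu.

From HB Require Import structures.
From mathcomp Require Import all_boot all_order all_algebra.
From mathcomp Require Import ring zify.
Set Implicit Arguments.
Unset Strict Implicit.
Unset Printing Implicit Defensive.
Import GRing.Theory.
Local Open Scope ring_scope.

(* Write f_i = u_i F^(mu_i) with u_i coprime to F and put h = F u_1 ... u_m.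
   The derivation theta(q) = h q' multiplies each term g_j of P by a
   polynomial lam_j of degree <= deg h - 1, and since F divides h, F^mult(P)
   divides every theta^k(P).  If the theta-Wronskian det(theta^k g_j)
   vanishes, the g_j are linearly dependent (this is where char 0 is used) and
   one term can be eliminated: induction on the number l of terms.  Otherwise
   det(theta^k g_j) = det(p_k(lam_j)) prod_j g_j with deg p_k <= k (deg h - 1),
   and Cramer's rule gives F^mult(P) | det(p_k(lam_j)) g_0.  Cancelling the
   F-part of g_0 and comparing degrees, with
   deg h - 1 <= deg F sum_i (d_i - mu_i), gives the j = 0 term of the bound. *)

Section DerivativeChar0.
Variable K : fieldType.
Hypothesis K0 : [pchar K] =i pred0.

Lemma natf_eq0 n : (n%:R == 0 :> K) = (n == 0)%N.
Proof. by move/pcharf0P: K0. Qed.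

Lemma natf_inj : injective (fun n : nat => n%:R : K).
Proof.
move=> m n /= Emn; wlog le_mn : m n Emn / (m <= n)%N.
  move=> W; case: (leqP m n) => [|/ltnW]; first exact: W.
  by move/(W _ _ (esym Emn)).
apply/eqP; rewrite eqn_leq le_mn /= -subn_eq0 -natf_eq0.
by rewrite natrB // Emn subrr.
Qed.

Lemma size_deriv_char0 (p : {poly K}) : size p^`() = (size p).-1.
Proof.
have [le_p1|lt1p] := leqP (size p) 1.
  by rewrite [p]size1_polyC // derivC size_poly0 size_polyC; case: (_ != 0).
have p0 : p != 0 by rewrite -size_poly_eq0 -lt0n ltnW.
have Esz : (size p).-2.+1 = (size p).-1 by rewrite prednK // ltn_predRL.
rewrite /deriv size_poly_eq // -mulr_natr mulf_neq0 ?natf_eq0 //.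
by rewrite Esz -lead_coefE lead_coef_eq0.
Qed.

Lemma lead_coef_deriv_char0 (p : {poly K}) :
  lead_coef p^`() = lead_coef p *+ (size p).-1.
Proof.
have [le_p1|lt1p] := leqP (size p) 1.
  rewrite [p]size1_polyC // derivC lead_coef0 size_polyC.
  by case: (_ != 0); rewrite /= mulr0n.
have Esz : (size p).-2.+1 = (size p).-1 by rewrite prednK // ltn_predRL.
by rewrite !lead_coefE size_deriv_char0 coef_deriv Esz.
Qed.

(* Two nonzero polynomials with vanishing Wronskian p q' - p' q have the
   same degree: compare leading coefficients. *)
Lemma wronskian2_size (p q : {poly K}) : p != 0 -> q != 0 ->
  p * q^`() = p^`() * q -> size p = size q.
Proof.
move=> p0 q0 E.
have [dq0|dq0] := eqVneq q^`() 0.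
  have /eqP dp0 : p^`() == 0.
    by move: E; rewrite dq0 mulr0 => /esym/eqP; rewrite mulf_eq0 (negPf q0) orbF.
  move: (size_deriv_char0 p) (size_deriv_char0 q) p0 q0.
  rewrite dp0 dq0 size_poly0 -!size_poly_eq0.
  by case: (size p) => [|[]] //; case: (size q) => [|[]].
have lpq0 : lead_coef p * lead_coef q != 0 by rewrite mulf_neq0 ?lead_coef_eq0.
move: (congr1 lead_coef E); rewrite !lead_coefM !lead_coef_deriv_char0.
rewrite mulrnAr mulrnAl.
rewrite -[_ *+ (size q).-1]mulr_natr -[_ *+ (size p).-1]mulr_natr.
move=> /(mulfI lpq0)/natf_inj Esz.
by rewrite (polySpred p0) (polySpred q0) Esz.
Qed.

(* A polynomial q whose Wronskian with p != 0 vanishes is a constant multiple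
   of p: otherwise q - c p, with c cancelling the leading term, would have
   vanishing Wronskian with p but smaller degree. *)
Lemma wronskian2_eq0 (p q : {poly K}) : p != 0 ->
  p * q^`() = p^`() * q -> q = (lead_coef q / lead_coef p) *: p.
Proof.
move=> p0 E; have [->|q0] := eqVneq q 0.
  by rewrite lead_coef0 mul0r scale0r.
set c := lead_coef q / lead_coef p; apply/eqP; rewrite -subr_eq0.
set r := q - c *: p; apply/negPn/negP => r0.
have Er : p * r^`() = p^`() * r.
  by rewrite derivB derivZ !mulrBr E -!scalerAr [p * _]mulrC.
have lq : q`_(size p).-1 = lead_coef q by rewrite (wronskian2_size p0 q0 E).
have : lead_coef r == 0.
  rewrite lead_coefE -(wronskian2_size p0 r0 Er) coefB coefZ lq -lead_coefE.
  by rewrite /c mulfVK ?subrr ?lead_coef_eq0.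
by rewrite lead_coef_eq0 (negPf r0).
Qed.

End DerivativeChar0.

Definition lin_dependent (R : pzRingType) (V : lmodType R) n (v : 'I_n -> V) :=
  exists (c : 'I_n -> R) (k : 'I_n), c k != 0 /\ \sum_j c j *: v j = 0.

Lemma lin_dependent_lift (R : pzRingType) (V : lmodType R) n
    (v : 'I_n.+1 -> V) :
  lin_dependent (fun j : 'I_n => v (lift ord_max j)) -> lin_dependent v.
Proof.
move=> [c [k [ck0 Ec]]].
exists (fun j => if unlift ord_max j is Some j' then c j' else 0).
exists (lift ord_max k).
rewrite liftK; split=> //.
rewrite (bigD1_ord ord_max) //= unlift_none scale0r add0r -[RHS]Ec.
by apply: eq_bigr => j _; rewrite liftK.
Qed.

Lemma sum_eliminate (K : fieldType) (V : lmodType K) n (v : 'I_n.+1 -> V)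
    (c : 'I_n.+1 -> K) (k : 'I_n.+1) :
  c k != 0 -> \sum_j c j *: v j = 0 ->
  \sum_j v j = \sum_(j : 'I_n) (1 - c (lift k j) / c k) *: v (lift k j).
Proof.
move=> ck0 Ec; have -> : \sum_j v j = \sum_j (v j - (c k)^-1 *: (c j *: v j)).
  by rewrite sumrB -scaler_sumr Ec scaler0 subr0.
rewrite (bigD1_ord k) //= scalerA mulVf // scale1r subrr add0r.
by apply: eq_bigr => j _; rewrite scalerA -{1}[v _]scale1r -scalerBl mulrC.
Qed.

(* Over an integral domain, a square matrix with nonzero determinant has
   trivial kernel (multiply by the adjugate). *)
Lemma det_neq0_mulmx_eq0 (R : idomainType) n (A : 'M[R]_n) (z : 'cV[R]_n) :
  \det A != 0 -> A *m z = 0 -> z = 0.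
Proof.
move=> detA0 Az0; have : \det A *: z = 0.
  by rewrite -mul_scalar_mx -mul_adj_mx -mulmxA Az0 mulmx0.
by move/eqP; rewrite scalemx_eq0 (negPf detA0) => /eqP.
Qed.

(* Products of powers
   of polynomials are eigenvectors of theta (see Eigen below) for a suitable h,
   and iterating theta yields a generalized Wronskian. *)
Section Theta.
Variables (K : fieldType) (h : {poly K}).

Definition theta (q : {poly K}) : {poly K} := h * q^`().

Lemma theta0 : theta 0 = 0. Proof. by rewrite /theta deriv0 mulr0. Qed.
Lemma thetaC c : theta c%:P = 0. Proof. by rewrite /theta derivC mulr0. Qed.
Lemma thetaD p q : theta (p + q) = theta p + theta q.
Proof. by rewrite /theta derivD mulrDr. Qed.
Lemma thetaZ c p : theta (c *: p) = c *: theta p.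
Proof. by rewrite /theta derivZ scalerAr. Qed.
Lemma thetaM p q : theta (p * q) = theta p * q + p * theta q.
Proof. by rewrite /theta derivM mulrDr mulrA [h * (p * _)]mulrCA. Qed.

Lemma theta_sum (I : finType) (G : I -> {poly K}) :
  theta (\sum_i G i) = \sum_i theta (G i).
Proof. exact: (big_morph _ thetaD theta0). Qed.

Lemma iter_theta_sum (I : finType) k (G : I -> {poly K}) :
  iter k theta (\sum_i G i) = \sum_i iter k theta (G i).
Proof. by elim: k => //= k ->; rewrite theta_sum. Qed.

Definition wronskian n (g : 'I_n -> {poly K}) : 'M[{poly K}]_n :=
  \matrix_(k, j) iter k theta (g j).

Lemma theta_kernel_shift n (g w : 'I_n.+1 -> {poly K}) :
  (forall k, (k <= n)%N -> \sum_j iter k theta (g j) * w j = 0) ->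
  forall k, (k < n)%N -> \sum_j iter k theta (g j) * theta (w j) = 0.
Proof.
move=> kerw k lt_kn; have := congr1 theta (kerw k (ltnW lt_kn)).
rewrite theta0 theta_sum (eq_bigr _ (fun j _ => thetaM _ _)) big_split /=.
have -> : \sum_j theta (iter k theta (g j)) * w j = 0 := kerw k.+1 lt_kn.
by rewrite add0r.
Qed.

Lemma theta_dvdp_exp (F q : {poly K}) N : F %| h -> F ^+ N %| q ->
  F ^+ N %| theta q.
Proof.
move=> /dvdpP [s Eh]; case: N => [_|n /dvdpP [r ->]].
  by rewrite expr0 dvd1p.
have -> : theta (r * F ^+ n.+1) =
    F ^+ n.+1 * (s * F * r^`() + s * r * F^`() * n.+1%:R).
  by rewrite /theta Eh derivM deriv_exp -mulr_natr exprS; ring.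
exact: dvdp_mulIl.
Qed.

Lemma iter_theta_dvdp_exp (F q : {poly K}) N k : F %| h -> F ^+ N %| q ->
  F ^+ N %| iter k theta q.
Proof. by move=> Fh Fq; elim: k => //= k; apply: theta_dvdp_exp. Qed.

Hypothesis K0 : [pchar K] =i pred0.
Hypothesis h0 : h != 0.

Lemma theta_wronskian2_eq0 (p q : {poly K}) : p != 0 ->
  p * theta q = theta p * q -> q = (lead_coef q / lead_coef p) *: p.
Proof.
move=> p0 E; apply: wronskian2_eq0 p0 _ => //; apply: (mulfI h0).
by rewrite mulrCA; move: E; rewrite /theta => ->; rewrite mulrA.
Qed.

(* By induction on n: if the
   Wronskian of the first n-1 functions is nonzero, the last column w of the
   adjugate is a kernel vector with w_last != 0, and the Wronskians
   w_last theta(w_j) - theta(w_last) w_j solve a nonsingular system, hence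
   vanish; so every w_j is a constant multiple of w_last. *)
Lemma wronskian_det_eq0 n (g : 'I_n -> {poly K}) :
  \det (wronskian g) = 0 -> lin_dependent g.
Proof.
elim: n g => [|n IH] g detW0.
  by move: detW0; rewrite det_mx00 => /eqP; rewrite oner_eq0.
pose g' (j : 'I_n) := g (lift ord_max j).
have [/IH/lin_dependent_lift //| detW'0] := eqVneq (\det (wronskian g')) 0.
pose w j := \adj (wronskian g) j ord_max.
have kerw k : (k <= n)%N -> \sum_j iter k theta (g j) * w j = 0.
  move=> le_kn; pose k' := Ordinal (le_kn : (k < n.+1)%N).
  have := congr1 (fun A : 'M_n.+1 => A k' ord_max) (mul_mx_adj (wronskian g)).
  rewrite detW0 !mxE /= mul0rn => E.
  by rewrite -[RHS]E; apply: eq_bigr => j _; rewrite mxE.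
have wmax0 : w ord_max != 0.
  rewrite /w mxE /cofactor mulf_eq0 negb_or signr_eq0 /=.
  by congr (\det _ != 0): detW'0; apply/matrixP => k j; rewrite !mxE lift_max.
pose z j := w ord_max * theta (w j) - theta (w ord_max) * w j.
have zmax0 : z ord_max = 0 by rewrite /z mulrC subrr.
have kerz : wronskian g' *m \col_j z (lift ord_max j) = 0.
  apply/matrixP => k i; rewrite !mxE.
  have : \sum_j iter k theta (g j) * z j = 0.
    rewrite (eq_bigr (fun j => w ord_max * (iter k theta (g j) * theta (w j))
      - theta (w ord_max) * (iter k theta (g j) * w j))) => [|j _]; last first.
      by rewrite /z; ring.
    rewrite sumrB -!mulr_sumr (theta_kernel_shift kerw) //.
    by rewrite (kerw k (ltnW _)) // !mulr0 subrr.
  rewrite (bigD1_ord ord_max) //= zmax0 mulr0 add0r => E.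
  by rewrite -[RHS]E; apply: eq_bigr => j _; rewrite !mxE.
have z0 j : z j = 0.
  case: (unliftP ord_max j) => [j'|] -> //.
  by have /matrixP/(_ j' 0) := det_neq0_mulmx_eq0 detW'0 kerz; rewrite !mxE.
pose c j := lead_coef (w j) / lead_coef (w ord_max).
have Ew j : w j = c j *: w ord_max.
  apply: theta_wronskian2_eq0 wmax0 _; apply/eqP; rewrite -subr_eq0.
  exact/eqP/z0.
exists c, ord_max; split; first by rewrite /c divff ?oner_eq0 // lead_coef_eq0.
have := kerw 0%N isT; under eq_bigr => j _ do rewrite Ew -scalerAr scalerAl.
by rewrite -mulr_suml => /eqP; rewrite mulf_eq0 (negPf wmax0) orbF => /eqP.
Qed.

End Theta.

Section Multiplicity.
Variable K : fieldType.
Implicit Types F P u : {poly K}.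

Lemma mult_dvd F P : F ^+ mult F P %| P.
Proof.
rewrite /mult.
have nonempty : (0 < #|[pred mu : 'I_(size P).+1 | (F ^+ mu %| P)%R]|)%N.
  by apply/card_gt0P; exists ord0; rewrite inE expr0 dvd1p.
have [mu0 Fmu0 ->] :=
  eq_bigmax_cond (fun mu : 'I_(size P).+1 => nat_of_ord mu) nonempty.
by rewrite inE in Fmu0.
Qed.

Lemma mult_max F P k : P != 0 -> (1 < size F)%N -> F ^+ k %| P ->
  (k <= mult F P)%N.
Proof.
move=> P0 F1 dvdFkP.
have le_k : (k <= (size (F ^+ k)).-1)%N.
  by rewrite size_exp leq_pmull // ltn_predRL.
have lt_k : (k < (size P).+1)%N.
  by rewrite ltnS (leq_trans le_k) // (leq_trans (leq_pred _)) // dvdp_leq.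
exact: (@leq_bigmax_cond _ _ (fun mu : 'I_(size P).+1 => nat_of_ord mu)
  (Ordinal lt_k)).
Qed.

Lemma mult_size F P : P != 0 -> ((size F).-1 * mult F P <= (size P).-1)%N.
Proof.
by move=> P0; rewrite -size_exp -!subn1 leq_sub2r // dvdp_leq // mult_dvd.
Qed.

Lemma mult_const F P : (1 < size F)%N -> P != 0 -> (size P <= 1)%N ->
  mult F P = 0%N.
Proof.
move=> F1 P0 P1; have := mult_size F P0.
by move: F1 P1; move: (size F) (size P) (mult F P) => sF sP k; nia.
Qed.

Lemma irredp_coprimep F u : irreducible_poly F -> ~~ (F %| u) -> coprimep F u.
Proof.
move=> Firr FNu; apply/negPn/negP => Hgcd.
have /eqp_dvdl gcdF := Firr.2 _ Hgcd (dvdp_gcdl F u).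
by move: FNu; rewrite -gcdF dvdp_gcdr.
Qed.

End Multiplicity.

Section Eigen.
Variables (K : fieldType) (h : {poly K}).
Local Notation theta := (theta h).

Lemma eigenM p q a b : theta p = a * p -> theta q = b * q ->
  theta (p * q) = (a + b) * (p * q).
Proof. by move=> Ep Eq; rewrite thetaM Ep Eq; ring. Qed.

Lemma eigenX p a n : theta p = a * p -> theta (p ^+ n) = (a *+ n) * p ^+ n.
Proof.
move=> Ep; elim: n => [|n IH]; first by rewrite expr0 mulr0n mul0r thetaC.
by rewrite exprS (eigenM Ep IH) mulrS.
Qed.

Lemma eigenZ c p a : theta p = a * p -> theta (c *: p) = a * (c *: p).
Proof. by move=> Ep; rewrite thetaZ Ep scalerAr. Qed.

Lemma eigen_prod (I : finType) (G : I -> {poly K}) (a : I -> {poly K}) :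
  (forall i, theta (G i) = a i * G i) ->
  theta (\prod_i G i) = (\sum_i a i) * \prod_i G i.
Proof.
move=> E; elim/big_rec2: _ => [|i x p _ IH]; first by rewrite mul0r thetaC.
exact: eigenM.
Qed.

Fixpoint eigen_poly (lam : {poly K}) k : {poly K} :=
  if k is k'.+1 then theta (eigen_poly lam k') + lam * eigen_poly lam k' else 1.

Lemma iter_theta_eigen q lam k : theta q = lam * q ->
  iter k theta q = eigen_poly lam k * q.
Proof.
move=> E; elim: k => [|k IH] /=; first by rewrite mul1r.
by rewrite IH thetaM E; ring.
Qed.

Definition eigen_mx n (lam : 'I_n -> {poly K}) : 'M[{poly K}]_n :=
  \matrix_(k, j) eigen_poly (lam j) k.

Lemma det_wronskian_eigen n (g lam : 'I_n -> {poly K}) :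
  (forall j, theta (g j) = lam j * g j) ->
  \det (wronskian h g) = \det (eigen_mx lam) * \prod_j g j.
Proof.
move=> Eg; have -> : wronskian h g = eigen_mx lam *m diag_mx (\row_j g j).
  by apply/matrixP => k j; rewrite mul_mx_diag !mxE (iter_theta_eigen _ (Eg j)).
rewrite det_mulmx det_diag; congr (_ * _).
by apply: eq_bigr => j _; rewrite mxE.
Qed.

Lemma eigen_cramer n (g lam : 'I_n.+1 -> {poly K}) :
  (forall j, theta (g j) = lam j * g j) ->
  \det (eigen_mx lam) * g ord0 =
  \sum_k \adj (eigen_mx lam) ord0 k * iter k theta (\sum_j g j).
Proof.
move=> Eg.
have Etheta : \col_k iter k theta (\sum_j g j) = eigen_mx lam *m \col_j g j.
  apply/matrixP => k z; rewrite !mxE iter_theta_sum; apply: eq_bigr => j _.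
  by rewrite !mxE (iter_theta_eigen _ (Eg j)).
have := congr1 (fun A : 'cV_n.+1 => (\adj (eigen_mx lam) *m A) ord0 ord0) Etheta.
rewrite /= mulmxA mul_adj_mx mul_scalar_mx !mxE => <-.
by apply: eq_bigr => k _; rewrite !mxE.
Qed.

End Eigen.

Section DegreeBounds.
Variable K : fieldType.
Implicit Types p q : {poly K}.

Definition deg_le p n := (size p <= n.+1)%N.

Lemma deg_le0 n : deg_le 0 n. Proof. by rewrite /deg_le size_poly0. Qed.
Lemma deg_le1 : deg_le 1 0. Proof. by rewrite /deg_le size_poly1. Qed.

Lemma deg_leD p q n : deg_le p n -> deg_le q n -> deg_le (p + q) n.
Proof.
by rewrite /deg_le => dp dq; rewrite (leq_trans (size_polyD _ _)) // geq_max dp.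
Qed.

Lemma deg_leM p q a b : deg_le p a -> deg_le q b -> deg_le (p * q) (a + b).
Proof.
rewrite /deg_le => dp dq; rewrite (leq_trans (size_polyMleq _ _)) //.
by move: (leq_add dp dq); rewrite addSn addnS; case: (size p + size q)%N.
Qed.

Lemma deg_le_sum (I : finType) (G : I -> {poly K}) n :
  (forall i, deg_le (G i) n) -> deg_le (\sum_i G i) n.
Proof.
move=> dG; apply: (big_ind (fun p => deg_le p n)) => //; first exact: deg_le0.
by move=> x y; exact: deg_leD.
Qed.

Lemma deg_le_prod (I : finType) (G : I -> {poly K}) b :
  (forall i, deg_le (G i) (b i)) -> deg_le (\prod_i G i) (\sum_i b i).
Proof.
move=> dG; elim/big_rec2: _ => [|i x p _ IH]; first exact: deg_le1.
exact: deg_leM.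
Qed.

Lemma deg_le_theta (h q : {poly K}) n B : ((size h).-2 <= B)%N -> deg_le q n ->
  deg_le (theta h q) (n + B).
Proof.
rewrite /deg_le /theta => hB dq; rewrite (leq_trans (size_polyMleq _ _)) //.
have : (size q^`() <= (size q).-1)%N by rewrite /deriv size_poly.
move: hB dq; case: (size h) => [|[|s]] /=; case: (size q^`()) => [|t];
  case: (size q) => [|r]; lia.
Qed.

(* An eigenvalue of theta_h has degree at most deg h - 1: compare degrees in
   h p' = a p. *)
Lemma deg_le_eigenvalue (h p a : {poly K}) : p != 0 -> theta h p = a * p ->
  deg_le a (size h).-2.
Proof.
rewrite /deg_le /theta => p0 Ep.
have [->|a0] := eqVneq a 0; first by rewrite size_poly0.
have := size_polyMleq h p^`(); rewrite Ep size_mul //.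
have := lt_size_deriv p0; move: a0 p0; rewrite -!size_poly_eq0.
by move: (size a) (size p) (size p^`()) (size h); lia.
Qed.

Lemma deg_le_eigen_poly (h lam : {poly K}) B k :
  ((size h).-2 <= B)%N -> deg_le lam B -> deg_le (eigen_poly h lam k) (k * B).
Proof.
move=> hB dlam; elim: k => [|k IH] /=; first exact: deg_le1.
rewrite mulSn; apply: deg_leD; last exact: deg_leM.
by rewrite addnC; exact: deg_le_theta.
Qed.

Lemma deg_le_det n (A : 'M[{poly K}]_n) B :
  (forall i j, deg_le (A i j) (i * B)) ->
  deg_le (\det A) ('C(n, 2) * B).
Proof.
move=> dA; apply: deg_le_sum => s; rewrite /deg_le size_Msign.
have -> : ('C(n, 2) * B = \sum_(i < n) (i * B))%N.
  by rewrite -big_distrl /= -bin2_sum big_mkord.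
exact: deg_le_prod.
Qed.

End DegreeBounds.

(* With h := F u_1 ... u_m every f_i, hence every monomial
   in the f_i, is a theta_h-eigenvector, and F divides h. *)
Section Factors.
Variable K : fieldType.
Variables (m : nat) (f : 'I_m -> {poly K}) (F : {poly K}).
Hypothesis fnz : forall i, f i != 0.
Hypothesis Firr : irreducible_poly F.

Let F1 : (1 < size F)%N := Firr.1.
Let Fnz : F != 0 := irredp_neq0 Firr.

Definition mu i := mult F (f i).
Definition coprime_part i := f i %/ F ^+ mu i.
Local Notation u := coprime_part.

Lemma f_dec i : f i = u i * F ^+ mu i.
Proof. by rewrite divpK // mult_dvd. Qed.

Lemma coprime_part_neq0 i : u i != 0.
Proof. by apply: contra_neq (fnz i); rewrite f_dec => ->; rewrite mul0r. Qed.

Lemma coprime_part_coprime i : coprimep F (u i).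
Proof.
apply: irredp_coprimep => //; apply/negP => Fu.
have : ((mu i).+1 <= mu i)%N.
  apply: mult_max (fnz i) F1 _.
  by rewrite f_dec exprSr [u i * _]mulrC dvdp_mul2l ?expf_neq0.
by rewrite ltnn.
Qed.

Definition hF := F * \prod_i u i.

Lemma hF_neq0 : hF != 0.
Proof.
by rewrite mulf_neq0 //; apply/prodf_neq0 => i _; exact: coprime_part_neq0.
Qed.

Definition rho i :=
  (\prod_k u k * F^`()) *+ mu i + F * ((u i)^`() * \prod_(k | k != i) u k).

Lemma theta_f i : theta hF (f i) = rho i * f i.
Proof.
rewrite /theta /hF /rho f_dec derivM deriv_exp (bigD1 i) //=.
by case: (mu i) => [|n]; rewrite ?exprS /=; ring.
Qed.

Definition monomial (al : 'I_m -> nat) := \prod_i f i ^+ al i.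
Definition eigval (al : 'I_m -> nat) := \sum_i rho i *+ al i.

Lemma theta_monomial al : theta hF (monomial al) = eigval al * monomial al.
Proof. by apply: eigen_prod => i; apply: eigenX; exact: theta_f. Qed.

Lemma monomial_neq0 al : monomial al != 0.
Proof. by apply/prodf_neq0 => i _; rewrite expf_neq0. Qed.

Lemma monomial_dec al :
  monomial al = \prod_i u i ^+ al i * F ^+ (\sum_i mu i * al i)%N.
Proof.
rewrite -prodrXr -big_split /=; apply: eq_bigr => i _.
by rewrite f_dec exprMn -exprM.
Qed.

Lemma coprime_monomial_part al : coprimep F (\prod_i u i ^+ al i).
Proof.
apply: (big_ind (coprimep F)) => [|p q|i _]; first exact: coprimep1.
  by rewrite coprimepMr => -> ->.
exact/coprimep_expr/coprime_part_coprime.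
Qed.

Definition eig_bound := (size hF).-2.
Definition defect := (\sum_i ((size (f i)).-1 - mu i))%N.

Lemma deg_f i : (size (f i)).-1 = ((size (u i)).-1 + (size F).-1 * mu i)%N.
Proof.
rewrite f_dec size_mul ?coprime_part_neq0 ?expf_neq0 // -size_exp.
rewrite (polySpred (coprime_part_neq0 i)) (polySpred (expf_neq0 (mu i) Fnz)).
by rewrite addSn addnS.
Qed.

Lemma eig_bound_le : (exists i, 1 < size (f i))%N ->
  (eig_bound <= (size F).-1 * defect)%N.
Proof.
move=> [i0 fi0]; set S := (\sum_i (size (u i)).-1)%N; set M := (\sum_i mu i)%N.
have deg_hF : deg_le hF ((size F).-1 + S).
  apply: deg_leM; first by rewrite /deg_le prednK // ltnW.
  by apply: deg_le_prod => i; rewrite /deg_le leqSpred.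
have Edefect : defect = (S + ((size F).-1 - 1) * M)%N.
  rewrite /defect big_distrr -big_split /=; apply: eq_bigr => i _.
  by rewrite deg_f; move: F1; case: (size F) => [|[|b]] //= _; lia.
have pos : (1 <= S + (size F).-1 * M)%N.
  rewrite big_distrr -big_split /= (bigD1 i0) //= -deg_f.
  by move: fi0; case: (size (f i0)) => [|[|c]] //; lia.
rewrite /eig_bound {}Edefect; move: deg_hF pos F1; rewrite /deg_le.
move: (size F) (size hF) S M => sF sh s M; nia.
Qed.

Lemma deg_le_monomial_const (const : forall i, (size (f i) <= 1)%N) al :
  deg_le (monomial al) 0.
Proof.
apply: (big_ind (fun q => deg_le q 0)) => [|p q dp dq|i _]; first exact: deg_le1.
  exact: (deg_leM dp dq).
rewrite /deg_le (leq_trans (size_poly_exp_leq _ _)) //.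
by have := const i; case: (size (f i)) => [|[]].
Qed.

Hypothesis K0 : [pchar K] =i pred0.

(* If the theta-Wronskian of the l+1 terms g_j of P is
   nonzero, Cramer's rule shows that F^(mult F P) divides det(p_k(lam_j)) g_0;
   cancelling the F-part of g_0 and bounding the degree of the determinant
   yields the bound of the j = 0 term. *)
Lemma mult_bound_wronskian_neq0 (nonconst : exists i, (1 < size (f i))%N)
    l (alpha : 'I_m -> 'I_l.+1 -> nat) (a : 'I_l.+1 -> K) :
  let g j := a j *: monomial (alpha^~ j) in
  \det (wronskian hF g) != 0 ->
  (mult F (\sum_j g j) <= \sum_i mu i * alpha i ord0 + 'C(l.+1, 2) * defect)%N.
Proof.
move=> g W0; set N := mult F _; set e := (\sum_i mu i * alpha i ord0)%N.
pose lam j := eigval (alpha^~ j); pose Mx := eigen_mx hF lam.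
have Eg j : theta hF (g j) = lam j * g j.
  by apply: eigenZ; exact: theta_monomial.
have detW := det_wronskian_eigen Eg.
have Mx0 : \det Mx != 0.
  by apply: contra_neq W0; rewrite detW => ->; rewrite mul0r.
have a0 : a ord0 != 0.
  apply: contra_neq W0; rewrite detW (bigD1 ord0) //= /g => ->.
  by rewrite scale0r mul0r mulr0.
have dvd_Mx : F ^+ N %| \det Mx * F ^+ e.
  have : F ^+ N %| \det Mx * g ord0.
    rewrite eigen_cramer //.
    apply: (big_ind (fun q => F ^+ N %| q)) => [|p q|k _].
    - exact: dvdp0.
    - exact: dvdp_add.
    - apply/dvdp_mull/iter_theta_dvdp_exp; last exact: mult_dvd.
      exact: dvdp_mulIl.
  rewrite /g monomial_dec -scalerAr dvdpZr // mulrCA Gauss_dvdpr //.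
  exact/coprimep_expl/coprime_monomial_part.
have [le_Ne|lt_eN] := leqP N e; first exact: leq_trans le_Ne (leq_addr _ _).
have dvd_Mx' : F ^+ (N - e) %| \det Mx.
  by rewrite -(dvdp_mul2r _ _ (expf_neq0 e Fnz)) -exprD subnK // ltnW.
have deg_Mx : deg_le (\det Mx) ('C(l.+1, 2) * eig_bound).
  apply: deg_le_det => k j; rewrite mxE; apply: deg_le_eigen_poly => //.
  exact: deg_le_eigenvalue (monomial_neq0 _) (theta_monomial _).
rewrite -leq_subLR -(@leq_pmul2l (size F).-1) ?ltn_predRL //.
apply: leq_trans (leq_mul (leqnn _) (mult_max Mx0 F1 dvd_Mx')) _.
apply: leq_trans (mult_size F Mx0) _.
rewrite -ltnS prednK ?lt0n ?size_poly_eq0 //.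
by apply: leq_trans deg_Mx _; rewrite ltnS mulnCA leq_mul2l eig_bound_le ?orbT.
Qed.

(* If the theta-Wronskian of the terms vanishes they are linearly dependent
   (char 0) and one term can be eliminated, which only decreases the binomial
   weights; otherwise the nonsingular case applies with j = 0. *)
Lemma mult_bound_nonconstant (nonconst : exists i, (1 < size (f i))%N)
    l (alpha : 'I_m -> 'I_l -> nat) (a : 'I_l -> K) :
  \sum_(j < l) a j *: \prod_(i < m) f i ^+ alpha i j != 0 ->
  (mult F (\sum_(j < l) a j *: \prod_(i < m) f i ^+ alpha i j) <=
   \max_(j < l) \sum_(i < m) (mult F (f i) * alpha i j
       + ((size (f i)).-1 - mult F (f i)) * 'C(l - j, 2)))%N.
Proof.
elim: l alpha a => [|l IH] alpha a P0; first by rewrite big_ord0 eqxx in P0.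
pose g j := a j *: monomial (alpha^~ j).
have [/(wronskian_det_eq0 K0 hF_neq0) [c [k [ck0 Ec]]]|W0] :=
  eqVneq (\det (wronskian hF g)) 0; last first.
  apply: leq_trans (mult_bound_wronskian_neq0 nonconst W0) _.
  apply: leq_trans _ (leq_bigmax ord0).
  by rewrite big_split /= -big_distrl /= subn0 mulnC.
pose alpha' i (j : 'I_l) := alpha i (lift k j).
pose a' (j : 'I_l) := (1 - c (lift k j) / c k) * a (lift k j).
have EP : \sum_(j < l.+1) a j *: \prod_i f i ^+ alpha i j =
          \sum_(j < l) a' j *: \prod_i f i ^+ alpha' i j.
  by rewrite (sum_eliminate ck0 Ec); apply: eq_bigr => j _; rewrite scalerA.
rewrite EP; apply: leq_trans (IH alpha' a' _) _; first by rewrite -EP.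
apply/bigmax_leqP => j _; apply: leq_trans (leq_bigmax (lift k j)).
apply: leq_sum => i _; rewrite leq_add2l leq_mul // leq_bin2l //.
by have := ltn_ord j; rewrite /= /bump; case: (k <= j)%N => /=; lia.
Qed.

End Factors.

(* If some f_i is nonconstant this is mult_bound_nonconstant; otherwise P is
   a nonzero constant, in which F has multiplicity 0. *)
Theorem theorem2p6 (K : fieldType) (Hchar : [pchar K] =i pred0)
  (m l : nat) (f : 'I_m -> {poly K}) (alpha : 'I_m -> 'I_l -> nat)
  (a : 'I_l -> K) (F : {poly K}) :
  (forall i, f i != 0) ->
  irreducible_poly F ->
  let P := \sum_(j < l) a j *: \prod_(i < m) f i ^+ alpha i j in
  P != 0 ->
  (mult F P <=
   \max_(j < l) \sum_(i < m)
      (mult F (f i) * alpha i j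
       + ((size (f i)).-1 - mult F (f i)) * 'C(l - j, 2)))%N.
Proof.
move=> fnz Firr P P0.
have [/existsP nonconst|/existsPn const] :=
  boolP [exists i, (1 < size (f i))%N].
  exact: mult_bound_nonconstant.
rewrite (mult_const Firr.1 P0) //; apply: deg_le_sum => j.
rewrite /deg_le (leq_trans (size_scale_leq _ _)) //.
by apply: deg_le_monomial_const => i; rewrite leqNgt const.
Qed.
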